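(* For every $V \in \mathrm{SL}_2(\mathbb C)$ and every $l \in \mathbb N$, we have $$\det \sigma_l\big(\mathrm{Ad}(V)\big) = (l+1)\, S_l^2(v), \qquad \text{where } v = \operatorname{tr} V.$$
   Context: Here $\mathrm{Ad}$ denotes the adjoint action of $\mathrm{SL}_2(\mathbb C)$ on its Lie algebra $\mathfrak{sl}_2(\mathbb C)$ of trace-zero $2\times 2$ complex matrices, $\mathrm{Ad}(V)(g) = V g V^{-1}$; thus $\mathrm{Ad}(V)$ is regarded as a $3\times 3$ matrix in $\mathrm{SL}_3(\mathbb C)$ (explicitly, for $V = \begin{bmatrix} e & f\\ g & h\end{bmatrix}$, $\mathrm{Ad}(V) = \begin{bmatrix} e^2 & -2ef & -f^2\\ -eg & eh+fg & fh\\ -g^2 & 2gh & h^2\end{bmatrix}$). For $l \ge 0$ and a square matrix $U$, $\sigma_l(U) = \sum_{i=0}^{l} U^i$. The $S_l(v)$ are the Chebyshev polynomials of the second kind, defined by $S_0(v)=1$, $S_1(v)=v$, and $S_l(v) = v S_{l-1}(v) - S_{l-2}(v)$ for all integers $l$. *)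

From mathcomp Require Import all_boot all_order all_algebra.
Set Implicit Arguments. Unset Strict Implicit. Unset Printing Implicit Defensive.
Import GRing.Theory Num.Theory.
Local Open Scope ring_scope.

Definition Ad {C : comNzRingType} (V : 'M[C]_2) : 'M[C]_3 :=
  let e := V 0 0 in let f := V 0 1 in let g := V 1 0 in let h := V 1 1 in
  \matrix_(i < 3, j < 3)
    match nat_of_ord i, nat_of_ord j with
    | 0, 0 => e ^+ 2       | 0, 1 => - (2%:R * e * f) | 0, _ => - f ^+ 2
    | 1, 0 => - (e * g)    | 1, 1 => e * h + f * g    | 1, _ => f * h
    | _, 0 => - g ^+ 2     | _, 1 => 2%:R * g * h     | _, _ => h ^+ 2
    end.

Definition sigma {C : comNzRingType} (l : nat) (U : 'M[C]_3) : 'M[C]_3 :=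
  \sum_(i < l.+1) U ^+ i.

Fixpoint cheb2 {C : comNzRingType} (v : C) (l : nat) : C :=
  match l with
  | 0 => 1
  | 1 => v
  | (m.+1 as n).+1 => v * cheb2 v n - cheb2 v m
  end.

(* Since Ad is multiplicative, det sigma_l(Ad V) only depends on the conjugacy
   class of V, so by Schur's theorem V may be taken lower triangular, with
   diagonal e, h and e h = 1.  Then Ad V is triangular with diagonal e^2, 1, h^2,
   and a polynomial in a triangular matrix has determinant the product of the
   polynomial at the diagonal entries: (sum_k e^2k) (l+1) (sum_k h^2k).  Finally
   sum_{k<=l} e^2k = e^l S_l(e+h), as both sides satisfy the recurrence
   x_{l+2} = (e^2+1) x_{l+1} - e^2 x_l, where e^2 + 1 = e (e+h). *)

From mathcomp Require Import all_boot all_order all_algebra.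
From mathcomp Require Import ring.
Set Implicit Arguments.
Unset Strict Implicit.
Unset Printing Implicit Defensive.
Import GRing.Theory Num.Theory.
Local Open Scope ring_scope.

Lemma big_ord2 (T : Type) (idx : T) (op : Monoid.law idx) (F : 'I_2 -> T) :
  \big[op/idx]_(i < 2) F i = op (F 0) (F 1).
Proof.
rewrite big_ord_recr big_ord1 /=.
by congr (op (F _) (F _)); apply: val_inj.
Qed.

Section TriangularMatrices.
Variables (R : pzSemiRingType) (n : nat).
Implicit Types (A B : 'M[R]_n).

Lemma mulmx_trig A B : is_trig_mx A -> is_trig_mx B -> is_trig_mx (A *m B).
Proof.
move=> /is_trig_mxP trA /is_trig_mxP trB; apply/is_trig_mxP => i j lt_ij.
rewrite mxE big1 // => k _; case: (ltnP i k) => [lt_ik | le_ki].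
  by rewrite trA ?mul0r.
by rewrite trB ?mulr0 // (leq_ltn_trans le_ki).
Qed.

Lemma mulmx_trig_diag A B i : is_trig_mx A -> is_trig_mx B ->
  (A *m B) i i = A i i * B i i.
Proof.
move=> /is_trig_mxP trA /is_trig_mxP trB.
rewrite mxE (bigD1 i) //= big1 ?addr0 // => k ne_ki.
case: (ltngtP i k) => [lt_ik | lt_ki | /val_inj eq_ik].
- by rewrite trA ?mul0r.
- by rewrite trB ?mulr0.
- by rewrite eq_ik eqxx in ne_ki.
Qed.

Lemma addmx_trig A B : is_trig_mx A -> is_trig_mx B -> is_trig_mx (A + B).
Proof.
move=> /is_trig_mxP trA /is_trig_mxP trB; apply/is_trig_mxP => i j lt_ij.
by rewrite mxE trA ?trB ?addr0.
Qed.

End TriangularMatrices.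

Section TriangularHorner.
Variables (R : comNzRingType) (n : nat) (A : 'M[R]_n.+1).
Hypothesis trA : is_trig_mx A.

Lemma horner_mx_trig (p : {poly R}) :
  is_trig_mx (horner_mx A p) /\ forall i, horner_mx A p i i = p.[A i i].
Proof.
elim/poly_ind: p => [|p c [trp diagp]].
  by rewrite rmorph0; split=> [|i]; rewrite ?mx0_is_trig // mxE horner0.
rewrite rmorphD rmorphM /= horner_mx_X horner_mx_C -mulmxE; split=> [|i].
  by rewrite addmx_trig ?mulmx_trig ?scalar_mx_is_trig.
by rewrite mxE mulmx_trig_diag // diagp mxE eqxx mulr1n hornerMXaddC.
Qed.

Lemma det_horner_mx_trig (p : {poly R}) :
  \det (horner_mx A p) = \prod_(i < n.+1) p.[A i i].
Proof.
have [trp diagp] := horner_mx_trig p.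
by rewrite det_trig //; apply: eq_bigr => i _; rewrite diagp.
Qed.

End TriangularHorner.

Lemma det_uconj (R : comUnitRingType) n (P A : 'M[R]_n) : P \in unitmx ->
  \det (P *m A *m invmx P) = \det A.
Proof.
rewrite unitmxE => uP.
by rewrite !det_mulmx det_inv mulrAC mulrV // mul1r.
Qed.

Lemma tr_uconj (R : comUnitRingType) n (P A : 'M[R]_n) : P \in unitmx ->
  \tr (P *m A *m invmx P) = \tr A.
Proof. by move=> uP; rewrite mxtrace_mulC mulmxA mulVmx ?mul1mx. Qed.

Lemma det_horner_mx_uconj (F : fieldType) n (P A : 'M[F]_n.+1) (p : {poly F}) :
  P \in unitmx -> \det (horner_mx (P *m A *m invmx P) p) = \det (horner_mx A p).
Proof. by move=> uP; rewrite horner_mx_uconj ?det_uconj. Qed.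

Definition geom_poly (R : nzRingType) (l : nat) : {poly R} := \sum_(k < l.+1) 'X^k.

Lemma horner_geom_poly (R : comNzRingType) l (x : R) :
  (geom_poly R l).[x] = \sum_(k < l.+1) x ^+ k.
Proof. by rewrite horner_sum; apply: eq_bigr => k _; rewrite hornerXn. Qed.

Lemma sigmaE (R : comNzRingType) l (U : 'M[R]_3) :
  sigma l U = horner_mx U (geom_poly R l).
Proof.
rewrite rmorph_sum; apply: eq_bigr => k _.
by rewrite rmorphXn /= horner_mx_X.
Qed.

Lemma cheb2SS (R : comNzRingType) (v : R) l :
  cheb2 v l.+2 = v * cheb2 v l.+1 - cheb2 v l.
Proof. by []. Qed.

Lemma geom_sum_sqr_cheb2 (R : comNzRingType) (a b : R) l : a * b = 1 ->
  \sum_(k < l.+1) (a ^+ 2) ^+ k = a ^+ l * cheb2 (a + b) l.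
Proof.
move=> ab1; pose G m := \sum_(k < m.+1) (a ^+ 2) ^+ k.
have a2S1 : a ^+ 2 + 1 = a * (a + b) by rewrite mulrDr ab1 expr2.
have GS m : G m.+1 = 1 + a ^+ 2 * G m.
  rewrite /G big_ord_recl expr0 mulr_sumr; congr (_ + _).
  by apply: eq_bigr => k _; rewrite lift0 exprS.
suff: G l = a ^+ l * cheb2 (a + b) l /\ G l.+1 = a ^+ l.+1 * cheb2 (a + b) l.+1.
  by case=> GlE _; exact: GlE.
elim: l => [|l [IHl IHl1]].
  rewrite /G !big_ord_recr !big_ord0 /= expr1 -a2S1; split; ring.
split=> //.
have GSS : G l.+2 = (a ^+ 2 + 1) * G l.+1 - a ^+ 2 * G l by rewrite !GS; ring.
rewrite GSS a2S1 IHl IHl1 cheb2SS !exprS; ring.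
Qed.

Section Adjoint.
Variable R : comNzRingType.
Implicit Types (X Y T : 'M[R]_2).

Lemma Ad_mul X Y : Ad (X *m Y) = Ad X *m Ad Y.
Proof.
apply/matrixP => i j; rewrite !mxE !big_ord2 !big_ord_recr big_ord0 /= !mxE.
by case: i => [[|[|[|?]]] ?] //=; case: j => [[|[|[|?]]] ?] //=; ring.
Qed.

Lemma Ad1 : Ad (1%:M : 'M[R]_2) = 1%:M.
Proof.
apply/matrixP => i j; rewrite !mxE.
by case: i => [[|[|[|?]]] ?] //=; case: j => [[|[|[|?]]] ?] //=; ring.
Qed.

Lemma Ad_trig T : is_trig_mx T -> is_trig_mx (Ad T).
Proof.
move=> /is_trig_mxP trT; have T01 : T 0 1 = 0 by rewrite trT.
apply/is_trig_mxP => i j; rewrite mxE T01.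
by case: i => [[|[|[|?]]] ?] //=; case: j => [[|[|[|?]]] ?] //= _; ring.
Qed.

End Adjoint.

Section AdjointUnit.
Variable R : comUnitRingType.
Implicit Types (P V : 'M[R]_2).

Lemma Ad_unitmx P : P \in unitmx -> Ad P \in unitmx.
Proof.
move=> uP; have := Ad_mul P (invmx P); rewrite mulmxV // Ad1 => AdPV.
by have [] := mulmx1_unit (esym AdPV).
Qed.

Lemma Ad_invmx P : P \in unitmx -> invmx (Ad P) = Ad (invmx P).
Proof.
move=> uP; rewrite -[RHS]mul1mx -(mulVmx (Ad_unitmx uP)) -mulmxA -Ad_mul.
by rewrite mulmxV // Ad1 mulmx1.
Qed.

Lemma Ad_uconj P V : P \in unitmx ->
  Ad (P *m V *m invmx P) = Ad P *m Ad V *m invmx (Ad P).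
Proof. by move=> uP; rewrite !Ad_mul Ad_invmx. Qed.

End AdjointUnit.

Lemma det_sigma_Ad_trig (R : comNzRingType) (T : 'M[R]_2) l :
  is_trig_mx T -> \det T = 1 ->
  \det (sigma l (Ad T)) = l.+1%:R * cheb2 (\tr T) l ^+ 2.
Proof.
move=> trT detT; have T01 : T 0 1 = 0 by have /is_trig_mxP := trT; apply.
have eh1 : T 0 0 * T 1 1 = 1 by rewrite -detT det_trig // big_ord2.
have he1 : T 1 1 * T 0 0 = 1 by rewrite mulrC.
have sum1 : \sum_(k < l.+1) (1 : R) ^+ k = l.+1%:R.
  by under eq_bigr do rewrite expr1n; rewrite sumr_const card_ord.
rewrite sigmaE det_horner_mx_trig ?Ad_trig //.
rewrite !big_ord_recr big_ord0 /= mul1r !mxE /= !horner_geom_poly.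
rewrite T01 mul0r addr0 eh1 sum1 /mxtrace big_ord2 /=.
rewrite (geom_sum_sqr_cheb2 l eh1) (geom_sum_sqr_cheb2 l he1) (addrC (T 1 1)).
transitivity (l.+1%:R * cheb2 (T 0 0 + T 1 1) l ^+ 2 * (T 0 0 * T 1 1) ^+ l).
  by rewrite exprMn; ring.
by rewrite eh1 expr1n mulr1.
Qed.

Theorem proposition3p6 (C : numClosedFieldType) (V : 'M[C]_2) (l : nat) :
  \det V = 1 ->
  \det (sigma l (Ad V)) = l.+1%:R * (cheb2 (\tr V) l) ^+ 2.
Proof.
move=> detV; have [P /unitarymx_unit uP] := Schur V (ltn0Sn 1).
rewrite /similar_to conjumx // => trT.
rewrite -(tr_uconj V uP) -(det_sigma_Ad_trig l trT); last by rewrite det_uconj.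
by rewrite !sigmaE Ad_uconj // det_horner_mx_uconj ?Ad_unitmx.
Qed.
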